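(* Let $n\geqslant2$, $0<\varepsilon<1$, $i_0,j_0\in\{0,\dots,n\}$, $x_{i_0}\geqslant1$ and $y_{j_0}$ integers, $\boldsymbol{c}\in\mathbf{Z}^{n+1}$, $q\geqslant1$. For $\boldsymbol{x}=(x_i)\in\mathbf{Z}^{n+1}$ (with the given $x_{i_0}$) and $(a'_j)_{j\neq j_0}\in(\mathbf{Z}/q\mathbf{Z})^n$, let $\boldsymbol{a}'\in(\mathbf{Z}/q\mathbf{Z})^{n+1}$ have coordinates $a'_j$ ($j\neq j_0$) and $y_{j_0}\bmod q$ at $j_0$. Then for every $\eta>0$, \[\sum_{(x_i)_{i\neq i_0}\in\mathbf{Z}^n}\ \sum_{(a'_j)_{j\neq j_0}\in(\mathbf{Z}/q\mathbf{Z})^n}\underline{w}_\varepsilon(\boldsymbol{x})\,|S_q(\boldsymbol{x},\boldsymbol{a}')(\boldsymbol{c})|\ll q^{n+3+\eta}x_{i_0}^n,\] the implied constant depending only on $n,\varepsilon,\eta$.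
   Context: $e_q(x)=\exp(2i\pi x/q)$; $S_q(\boldsymbol{x},\boldsymbol{a}')(\boldsymbol{c})=\sum_{d\in(\mathbf{Z}/q\mathbf{Z})^*}\sum_{\boldsymbol{b}\in(\mathbf{Z}/q\mathbf{Z})^{n+1}}e_q\big(d\sum_kx_ka'_kb_k+\boldsymbol{c}.\boldsymbol{b}\big)$. $\omega_0(x)=\exp(-(1-x^2)^{-1})$ for $|x|<1$, $0$ otherwise; $c_0=\int\omega_0$; $\underline{\omega}_\varepsilon(x)=c_0^{-1}\int_{-\infty}^{x/\varepsilon-1}\omega_0(y)dy$; $\underline{w}_\varepsilon(\boldsymbol{x})=\prod_{i\neq i_0}\underline{\omega}_\varepsilon(1-\frac{|x_i|}{x_{i_0}})\underline{\omega}_\varepsilon(\frac{|x_i|}{x_{i_0}}-\frac1{x_{i_0}})$. *)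

From mathcomp Require Import all_boot all_order all_algebra.
From mathcomp Require Import all_classical all_reals all_analysis.
From mathcomp Require Import complex.
Set Implicit Arguments. Unset Strict Implicit. Unset Printing Implicit Defensive.
Import Order.TTheory GRing.Theory Num.Theory.
Local Open Scope ring_scope.

Definition eq_char (R : realType) (q : nat) (x : int) : R[i] :=
  (cos (2 * pi * x%:~R / q%:R) +i* sin (2 * pi * x%:~R / q%:R))%C.

(* Residues mod q are represented by 'I_q (integers 0..q-1); the units of
   Z/qZ are the d : 'I_q with coprime d q (for q = 1 this is {0}, as
   Z/1Z = {0} is the zero ring whose only element is a unit).
   Since e_q is q-periodic on Z, using integer representatives for
   a' (arbitrary integers) is the same as working in Z/qZ. *)
Definition S_q (R : realType) (n q : nat) (x a' c : 'I_n.+1 -> int) : R[i] :=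
  \sum_(d : 'I_q | coprime d q)
    \sum_(b : {ffun 'I_n.+1 -> 'I_q})
      eq_char R q ((d : nat)%:Z * (\sum_(k < n.+1) x k * a' k * (b k : nat)%:Z)
                   + \sum_(k < n.+1) c k * (b k : nat)%:Z).

Definition omega0 (R : realType) (x : R) : R :=
  if `|x| < 1 then expR (- (1 - x ^+ 2)^-1) else 0.

Definition c0 (R : realType) : R :=
  Rintegral (@lebesgue_measure R) setT (@omega0 R).

Definition omega_low (R : realType) (eps x : R) : R :=
  (c0 R)^-1 *
  Rintegral (@lebesgue_measure R) `]-oo, x / eps - 1]%classic (@omega0 R).

Definition w_low (R : realType) (n : nat) (eps : R) (i0 : 'I_n.+1)
    (x : 'I_n.+1 -> int) : R :=
  \prod_(i < n.+1 | i != i0)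
     (omega_low eps (1 - `|(x i)%:~R : R| / (x i0)%:~R) *
      omega_low eps (`|(x i)%:~R : R| / (x i0)%:~R - 1 / (x i0)%:~R)).

Definition xvec (n : nat) (i0 : 'I_n.+1) (X : int) (g : 'I_n -> int)
    : 'I_n.+1 -> int :=
  fun i => match unlift i0 i with Some k => g k | None => X end.

Definition avec (n : nat) (j0 : 'I_n.+1) (y : int) (q : nat) (a : 'I_n -> 'I_q)
    : 'I_n.+1 -> int :=
  fun j => match unlift j0 j with
           | Some k => ((a k : nat)%:Z)
           | None => (y %% (q%:Z))%Z
           end.

From mathcomp Require Import all_boot all_order all_algebra.
From mathcomp Require Import all_classical all_reals all_analysis.
From mathcomp Require Import complex ring lra.
Import Order.TTheory GRing.Theory Num.Theory.
Set Implicit Arguments. Unset Strict Implicit. Unset Printing Implicit Defensive.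

(* For each d, the sum over b in S_q factors into complete sums over the
   coordinates b_k, each equal to q [q | d x_k a'_k + c_k]; hence |S_q| is at
   most the sum over d of prod_k q [q | d x_k a'_k + c_k].
   For fixed d the congruence in a'_k has at most gcd(x_k, q) solutions, so
   summing over a' gives at most q^2 prod_{k <> j0} q gcd(x_k, q), and moving
   the missing index from j0 to i0 costs one more factor q.  The weight
   w_eps is bounded and vanishes unless 1 < |x_i| < x_{i0} for i <> i0, so
   the sum over x is at most (2 x_{i0} d(q))^n, where d(q) is the number of
   divisors of q, since sum_{v <= N} gcd(v, q) <= N d(q).  Finally
   d(q)^n = O(q^eta). *)

Lemma dvdn_divn_gcd d a b : 0 < d -> d %| a * b -> d %/ gcdn d a %| b.
Proof.
move=> d_gt0 dv_ab; have g_gt0 : 0 < gcdn d a by rewrite gcdn_gt0 d_gt0.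
rewrite -(@dvdn_pmul2l (gcdn d a)) // [X in X %| _]mulnC divnK ?dvdn_gcdl //.
by rewrite muln_gcdl dvdn_gcd dvdn_mulr.
Qed.

Notation ndivisors n := (size (divisors n)).

Lemma ndivisorsM a b : 0 < a -> 0 < b ->
  ndivisors (a * b) <= ndivisors a * ndivisors b.
Proof.
move=> a_gt0 b_gt0; rewrite -(size_allpairs muln).
apply: uniq_leq_size (divisors_uniq _) _ => d.
rewrite -dvdn_divisors ?muln_gt0 ?a_gt0 // => dv_ab.
have d_gt0 : 0 < d by apply: dvdn_gt0 dv_ab; rewrite muln_gt0 a_gt0.
rewrite -(divnK (dvdn_gcdl d a)) mulnC; apply/allpairsP.
exists (gcdn d a, d %/ gcdn d a) => /=.
by rewrite -!dvdn_divisors ?dvdn_gcdr ?dvdn_divn_gcd.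
Qed.

Lemma ndivisors_pfactor p e : prime p -> ndivisors (p ^ e) <= e.+1.
Proof.
move=> p_pr; have <- : size [seq p ^ m | m <- iota 0 e.+1] = e.+1.
  by rewrite size_map size_iota.
apply: uniq_leq_size (divisors_uniq _) _ => d.
rewrite -dvdn_divisors ?expn_gt0 ?prime_gt0 // => /(dvdn_pfactor _ _ p_pr).
by case=> m le_me ->; rewrite map_f // mem_iota.
Qed.

Lemma ndivisors_prod (I : Type) (s : seq I) (F : I -> nat) :
  (forall i, 0 < F i) ->
  ndivisors (\prod_(i <- s) F i) <= \prod_(i <- s) ndivisors (F i).
Proof.
move=> F_gt0; elim: s => [|i s IHs]; first by rewrite !big_nil.
rewrite !big_cons; apply: leq_trans (ndivisorsM _ _) _; rewrite ?prodn_gt0 //.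
by rewrite leq_mul2l IHs orbT.
Qed.

Lemma leq_expn2r m1 m2 e : m1 <= m2 -> m1 ^ e <= m2 ^ e.
Proof. by move=> le_m12; elim: e => // e IHe; rewrite !expnS leq_mul. Qed.

(* The factor k ^ k is only needed for the finitely many primes p < 2 ^ k. *)
Lemma succ_exp_le k p e : 0 < k -> 1 < p ->
  e.+1 ^ k <= (if p < 2 ^ k then k ^ k else 1) * p ^ e.
Proof.
move=> k_gt0 p_gt1; case: ifP => small_p.
  have le_e_k2 : e.+1 <= k * 2 ^ (e %/ k).
    apply: leq_trans (ltn_ceil _ k_gt0) _; rewrite mulnC leq_mul2l.
    by rewrite ltn_expl ?orbT.
  apply: leq_trans (leq_expn2r k le_e_k2) _.
  rewrite expnMn -expnM leq_mul2l; apply/orP; right.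
  apply: leq_trans (_ : 2 ^ e <= _); first by rewrite leq_pexp2l // leq_divM.
  exact: leq_expn2r.
rewrite mul1n; apply: leq_trans (leq_expn2r k (ltn_expl e (ltnSn 1))) _.
by rewrite -expnM mulnC expnM leq_expn2r // leqNgt small_p.
Qed.

Lemma ndivisors_pow_le k : 0 < k ->
  exists D, forall q, 0 < q -> ndivisors q ^ k <= D * q.
Proof.
move=> k_gt0; exists ((k ^ k) ^ (2 ^ k)) => q q_gt0.
have qE : q = \prod_(p <- primes q) p ^ logn p q.
  by rewrite {1}(prod_prime_decomp q_gt0) prime_decompE big_map.
have le_nd : ndivisors q <= \prod_(p <- primes q) (logn p q).+1.
  rewrite {1}qE; apply: leq_trans (ndivisors_prod _ _) _.
    by move=> p; rewrite expn_gt0; case: p.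
  rewrite big_seq [X in _ <= X]big_seq; apply: leq_prod => p.
  by rewrite mem_primes => /andP[p_pr _]; apply: ndivisors_pfactor.
apply: leq_trans (leq_expn2r k le_nd) _.
rewrite (big_morph (expn^~ k) (fun x y => expnMn x y k) (exp1n k)).
apply: leq_trans (_ : \prod_(p <- primes q)
    ((if p < 2 ^ k then k ^ k else 1) * p ^ logn p q) <= _).
  rewrite big_seq [X in _ <= X]big_seq; apply: leq_prod => p.
  by rewrite mem_primes => /andP[/prime_gt1 p_gt1 _]; apply: succ_exp_le.
rewrite big_split /= -qE leq_mul2r -big_mkcond big_const_seq /=.
rewrite iter_muln_1 -!expnM leq_pexp2l ?orbT ?expn_gt0 ?k_gt0 // leq_mul2l.
apply/orP; right.
rewrite -size_filter -[X in _ <= X](size_iota 0).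
apply: uniq_leq_size; first by rewrite filter_uniq ?primes_uniq.
by move=> p; rewrite mem_filter mem_iota => /andP[].
Qed.

Lemma sum_dvdn_mult N d : 0 < d ->
  \sum_(v < N | d %| v.+1) d = d * (N %/ d).
Proof.
move=> d_gt0; elim: N => [|N IHN]; first by rewrite big_ord0 div0n muln0.
rewrite big_mkcond big_ord_recr /= -big_mkcond IHN (divnS _ d_gt0) mulnDr.
by case: (d %| N.+1); rewrite ?muln1 ?muln0 ?addn0 // addnC.
Qed.

(* gcd(v.+1, q) is one of the divisors of q dividing v.+1; after swapping the
   sums, each divisor d of q contributes d * (N %/ d) <= N. *)
Lemma sum_gcdn_le N q : 0 < q ->
  \sum_(v < N) gcdn v.+1 q <= N * ndivisors q.
Proof.
move=> q_gt0.
apply: leq_trans (_ : \sum_(v < N) \sum_(d <- divisors q | d %| v.+1) d <= _).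
  apply: leq_sum => v _; rewrite big_mkcond (bigD1_seq (gcdn v.+1 q)) ?divisors_uniq //=.
    by rewrite dvdn_gcdl leq_addr.
  by rewrite -dvdn_divisors ?dvdn_gcdr.
under eq_bigr do rewrite big_mkcond /=.
rewrite exchange_big /= -sum1_size big_distrr /= big_seq [X in _ <= X]big_seq.
apply: leq_sum => d; rewrite -dvdn_divisors // => /(dvdn_gt0 q_gt0) d_gt0.
by rewrite -big_mkcond sum_dvdn_mult // muln1 mulnC leq_divM.
Qed.

Local Open Scope ring_scope.

Lemma ndivisors_exp_le_powR (R : realType) n (eta : R) : (0 < n)%N -> 0 < eta ->
  exists D : R, forall q, (0 < q)%N -> (ndivisors q)%:R ^+ n <= D * q%:R `^ eta.
Proof.
move=> n_gt0 eta_gt0; pose m := (Num.truncn eta^-1).+1.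
have mR_neq0 : (m%:R : R) != 0 by rewrite pnatr_eq0.
have le_m_eta : (m%:R : R)^-1 <= eta.
  rewrite -(invrK eta) lef_pV2 ?posrE ?invr_gt0 ?ltr0n // ltW //.
  exact: truncnS_gt.
have nm_gt0 : (0 < n * m)%N by rewrite muln_gt0 n_gt0.
have [D0 le_D0] := ndivisors_pow_le nm_gt0.
exists ((D0%:R : R) `^ m%:R^-1) => q q_gt0.
set t : R := (ndivisors q)%:R.
have -> : t ^+ n = (t ^+ (n * m)) `^ m%:R^-1.
  by rewrite -!powR_mulrn ?ler0n // -powRrM natrM -mulrA mulfV // mulr1.
apply: le_trans (_ : ((D0 * q)%:R : R) `^ m%:R^-1 <= _).
  by rewrite ge0_ler_powR ?nnegrE ?exprn_ge0 ?ler0n // /t -natrX ler_nat le_D0.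
by rewrite natrM powRM ?ler0n // ler_wpM2l ?powR_ge0 // ler_powR ?ler1n.
Qed.

(* Two solutions are congruent modulo r = q / gcd(a, q), so a solution is
   determined by its quotient by r. *)
Lemma card_lin_congr_le (q : nat) (a c : int) : (0 < q)%N ->
  (#|[set t : 'I_q | (q%:Z %| (a * (t : nat)%:Z + c)%R)%Z]| <= gcdn `|a| q)%N.
Proof.
move=> q_gt0; set g := gcdn q `|a|; set r := (q %/ g)%N.
have g_gt0 : (0 < g)%N by rewrite gcdn_gt0 q_gt0.
have rgE : (r * g)%N = q by rewrite divnK // dvdn_gcdl.
have r_gt0 : (0 < r)%N by move: q_gt0; rewrite -rgE muln_gt0 => /andP[].
have lt_tr (t : 'I_q) : (t %/ r < g)%N by rewrite ltn_divLR // mulnC rgE.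
rewrite gcdnC -/g -(card_in_imset (f := fun t => Ordinal (lt_tr t))); last first.
  move=> t1 t2; rewrite !inE => sol1 sol2 /(congr1 val) /= eq_div.
  have : (q%:Z %| (a * ((t1 : nat)%:Z - (t2 : nat)%:Z))%R)%Z.
    by rewrite mulrBr -(addrKA c) [c + _]addrC rpredB.
  rewrite dvdzE /= abszM => /(dvdn_divn_gcd q_gt0) r_dvd.
  have : (r%:Z %| ((t1 : nat)%:Z - (t2 : nat)%:Z)%R)%Z by rewrite dvdzE.
  rewrite -eqz_mod_dvd !modz_nat => /eqP[eq_mod]; apply: val_inj.
  by rewrite /= (divn_eq t1 r) (divn_eq t2 r) eq_div eq_mod.
by apply: leq_trans (max_card _) _; rewrite card_ord.
Qed.

Section ExponentialSums.
Variable R : realType.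
Implicit Types (q : nat) (m : int).

Lemma eq_charD q m1 m2 : eq_char R q (m1 + m2) = eq_char R q m1 * eq_char R q m2.
Proof.
rewrite /eq_char intrD mulrDr mulrDl cosD sinD.
by apply/eqP; rewrite eq_complex /=; apply/andP; split; apply/eqP; ring.
Qed.

Lemma eq_char0 q : eq_char R q 0 = 1.
Proof. by rewrite /eq_char mulr0 mul0r cos0 sin0. Qed.

Lemma eq_char_sum q (I : Type) (r : seq I) (P : pred I) (F : I -> int) :
  eq_char R q (\sum_(i <- r | P i) F i) = \prod_(i <- r | P i) eq_char R q (F i).
Proof. exact: (big_morph _ (@eq_charD q) (@eq_char0 q)). Qed.

Lemma eq_charMn q m (b : nat) : eq_char R q (m * b%:Z) = eq_char R q m ^+ b.
Proof.
elim: b => [|b IHb]; first by rewrite mulr0 eq_char0 expr0.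
by rewrite -addn1 PoszD mulrDr mulr1 eq_charD IHb exprD expr1.
Qed.

Lemma cos_sin_2pi_int m : cos (2 * pi * m%:~R) = 1 :> R /\ sin (2 * pi * m%:~R) = 0 :> R.
Proof.
have nat_case (k : nat) : cos (2 * pi * k%:R) = 1 :> R /\ sin (2 * pi * k%:R) = 0 :> R.
  have -> : 2 * pi * k%:R = 0 + (pi *+ 2) *+ k :> R by rewrite add0r -mulr_natr; ring.
  by rewrite (periodicn (@cosD2pi R)) (periodicn (@sinD2pi R)) cos0 sin0.
case: m => k; first exact: nat_case.
by rewrite NegzE mulrNz mulrN cosN sinN; case: (nat_case k.+1) => -> ->; rewrite oppr0.
Qed.

Lemma eq_char_eq1 q m : (0 < q)%N -> (eq_char R q m == 1) = (q%:Z %| m)%Z.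
Proof.
move=> q_gt0; have qR_neq0 : q%:R != 0 :> R by rewrite pnatr_eq0 -lt0n.
have eq_char_qmul k : eq_char R q (q%:Z * k) = 1.
  rewrite /eq_char (_ : 2 * pi * _ / _ = 2 * pi * k%:~R); last first.
    by rewrite intrM /= -pmulrn; field.
  by case: (cos_sin_2pi_int k) => -> ->.
rewrite {1}(divz_eq m q%:Z) eq_charD [((m %/ _)%Z * _)%R]mulrC eq_char_qmul mul1r.
rewrite {2}(divz_eq m q%:Z) rpredDl ?dvdz_mull ?dvdzz //.
have : (0 <= m %% q%:Z < q%:Z)%Z by rewrite modz_ge0 ?ltz_pmod ?ltz_nat // eqz_nat -lt0n.
case: (m %% q%:Z)%Z => // r; rewrite ltz_nat => /andP[_ lt_rq].
case: (posnP r) => [->|r_gt0]; first by rewrite eq_char0 eqxx dvdz0.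
rewrite dvdzE /= gtnNdvd //.
apply/negbTE/eqP => -[+ _]; set a := pi * (r%:R / q%:R) : R.
have a_in : 0 < a < pi.
  have lt_rq1 : r%:R / q%:R < 1 :> R by rewrite ltr_pdivrMr ?ltr0n // mul1r ltr_nat.
  by rewrite mulr_gt0 ?pi_gt0 ?divr_gt0 ?ltr0n //= -[X in _ < X]mulr1 ltr_pM2l ?pi_gt0.
rewrite (_ : 2 * pi * _ / _ = a *+ 2); last by rewrite /a -mulr_natr -pmulrn; ring.
rewrite cos_mulr2n => cos2a.
have : sin a ^+ 2 = 0 by rewrite sin2cos2; move: cos2a; rewrite mulr2n; lra.
by move/eqP; rewrite expf_eq0 /= => /eqP sin_a0; move: (sin_gt0_pi a_in); rewrite sin_a0 ltxx.
Qed.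

Definition qdelta q m : R := if (q%:Z %| m)%Z then q%:R else 0.

Lemma qdelta_ge0 q m : 0 <= qdelta q m.
Proof. by rewrite /qdelta; case: ifP. Qed.

Lemma qdelta_le q m : qdelta q m <= q%:R.
Proof. by rewrite /qdelta; case: ifP. Qed.

Lemma sum_eq_char q m : (0 < q)%N ->
  \sum_(b < q) eq_char R q (m * (b : nat)%:Z) = if (q%:Z %| m)%Z then q%:R else 0.
Proof.
move=> q_gt0; under eq_bigr do rewrite eq_charMn.
rewrite -eq_char_eq1 //; case: eqP => [->|/eqP ne1].
  by under eq_bigr do rewrite expr1n; rewrite sumr_const card_ord.
have lreg : GRing.lreg (eq_char R q m - 1) by apply/lregP; rewrite subr_eq0.
apply: lreg; rewrite -subrX1 mulr0 -eq_charMn.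
by apply/eqP; rewrite subr_eq0 eq_char_eq1 // mulrC dvdz_mulr.
Qed.

Lemma S_q_prod n q (x a c : 'I_n.+1 -> int) :
  S_q R q x a c = \sum_(d : 'I_q | coprime d q) \prod_(k < n.+1)
     \sum_(b < q) eq_char R q ((d%:Z * x k * a k + c k) * (b : nat)%:Z).
Proof.
apply: eq_bigr => d _; rewrite bigA_distr_bigA; apply: eq_bigr => b _.
rewrite -eq_char_sum mulr_sumr -big_split; congr (eq_char R q _).
by apply: eq_bigr => k _ /=; ring.
Qed.

Lemma normc_sum (I : Type) (r : seq I) (P : pred I) (F : I -> R[i]) :
  Normc.normc (\sum_(i <- r | P i) F i) <= \sum_(i <- r | P i) Normc.normc (F i).
Proof.
elim/big_ind2: _ => [|z1 z2 u1 u2 le1 le2|//]; first by rewrite Normc.normc0.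
by apply: le_trans (le_normcD _ _) _; apply: lerD.
Qed.

Lemma normc_ge0 (z : R[i]) : 0 <= Normc.normc z.
Proof. by case: z => ? ?; rewrite /Normc.normc sqrtr_ge0. Qed.

Lemma normc_natr (m : nat) : Normc.normc (m%:R : R[i]) = m%:R.
Proof. by rewrite normcMn Normc.normc1. Qed.

Lemma normc_S_q_le n q (x a c : 'I_n.+1 -> int) : (0 < q)%N ->
  Normc.normc (S_q R q x a c) <=
  \sum_(d : 'I_q | coprime d q) \prod_(k < n.+1) qdelta q (d%:Z * x k * a k + c k).
Proof.
move=> q_gt0; rewrite S_q_prod; apply: le_trans (normc_sum _ _ _) _.
apply: ler_sum => d _; rewrite (big_morph _ (@Normc.normcM R) (@Normc.normc1 R)).
apply: ler_prod => k _; rewrite normc_ge0 sum_eq_char // /qdelta.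
by case: ifP => _; rewrite ?Normc.normc0 ?normc_natr /=.
Qed.

Lemma sum_qdelta_lin_le q (a c : int) : (0 < q)%N ->
  \sum_(b < q) qdelta q (a * (b : nat)%:Z + c) <= q%:R * (gcdn `|a| q)%:R.
Proof.
move=> q_gt0; rewrite /qdelta -big_mkcond sumr_const -[X in X <= _]mulr_natr.
rewrite ler_pM2l ?ltr0n // ler_nat.
by move: (card_lin_congr_le a c q_gt0); rewrite cardsE.
Qed.

Lemma sum_avec_normc_S_q_le n q (j0 : 'I_n.+1) (x c : 'I_n.+1 -> int) (y : int) :
  (0 < q)%N ->
  \sum_(a : {ffun 'I_n -> 'I_q}) Normc.normc (S_q R q x (avec j0 y a) c)
  <= q%:R ^+ 2 * \prod_(k < n) (q%:R * (gcdn `|x (lift j0 k)| q)%:R).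
Proof.
move=> q_gt0; set B := \prod_(k < n) _.
have B_ge0 : 0 <= B by apply: prodr_ge0 => k _; rewrite mulr_ge0 ?ler0n.
apply: le_trans (_ : \sum_(d : 'I_q | coprime d q) q%:R * B <= _); last first.
  apply: le_trans (_ : \sum_(d < q) q%:R * B <= _).
    by rewrite big_mkcond /=; apply: ler_sum => d _; case: ifP; rewrite ?mulr_ge0 ?ler0n.
  by rewrite sumr_const card_ord -[_ *+ q]mulr_natl mulrA expr2.
apply: le_trans (ler_sum _ (fun a _ => normc_S_q_le _ _ _ q_gt0)) _.
rewrite exchange_big /=; apply: ler_sum => d coprime_dq.
pose qd k (t : nat) := qdelta q (d%:Z * x (lift j0 k) * t%:Z + c (lift j0 k)).
apply: le_trans (_ : \sum_(a : {ffun 'I_n -> 'I_q}) q%:R * \prod_(k < n) qd k (a k) <= _).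
  apply: ler_sum => a _; rewrite (bigD1_ord j0) //= (eq_bigr (fun k => qd k (a k))).
    by rewrite ler_pM ?qdelta_le ?qdelta_ge0 ?prodr_ge0 // => k _; apply: qdelta_ge0.
  by move=> k _; rewrite /avec liftK.
rewrite -mulr_sumr -(bigA_distr_bigA (fun k (t : 'I_q) => qd k t)) ler_pM2l ?ltr0n //.
apply: ler_prod => k _; rewrite sumr_ge0 => [|t _]; last exact: qdelta_ge0.
have -> : gcdn `|x (lift j0 k)| q = gcdn `|d%:Z * x (lift j0 k)| q.
  by rewrite abszM /= mulnC [RHS]gcdnC Gauss_gcdl 1?gcdnC // coprime_sym.
exact: sum_qdelta_lin_le.
Qed.
End ExponentialSums.

Lemma prod_lift_le (R : numDomainType) n (f : 'I_n.+1 -> R) (B : R) (i j : 'I_n.+1) :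
  (forall k, 1 <= f k <= B) ->
  \prod_(k < n) f (lift j k) <= B * \prod_(k < n) f (lift i k).
Proof.
move=> f_in; have f1 k : 1 <= f k by case/andP: (f_in k).
have fB k : f k <= B by case/andP: (f_in k).
have f_ge0 k : 0 <= f k by apply: le_trans (f1 k).
apply: le_trans (_ : f j * \prod_(k < n) f (lift j k) <= _).
  by rewrite ler_peMl ?prodr_ge0.
have prodE k0 : \prod_(k < n.+1) f k = f k0 * \prod_(k < n) f (lift k0 k).
  by rewrite (bigD1_ord k0).
by rewrite -prodE (prodE i) ler_wpM2r ?prodr_ge0.
Qed.

Section Weights.
Variable R : realType.
Local Open Scope classical_set_scope.

Lemma omega0_ge0 (x : R) : 0 <= omega0 x.
Proof. by rewrite /omega0; case: ifP => // _; apply: expR_ge0. Qed.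

Lemma omega0_le1 (x : R) : omega0 x <= 1.
Proof.
rewrite /omega0; case: ifP => // lt_x1; rewrite expR_le1 oppr_le0 invr_ge0 subr_ge0.
by rewrite -real_normK ?num_real // expr_le1 // ltW.
Qed.

(* omega_0 is a nonincreasing function of x^2, hence Borel. *)
Lemma measurable_omega0 : measurable_fun setT (@omega0 R).
Proof.
pose b (u : R) := if u < 1 then expR (- (1 - u)^-1) else 0.
have b_noninc : {homo b : u v /~ u <= v}.
  move=> u v le_vu; rewrite /b; case: (ltP u 1) => [lt_u1|le1u]; last first.
    by case: ifP => // _; apply: expR_ge0.
  rewrite (le_lt_trans le_vu lt_u1) ler_expR lerN2 lef_pV2 ?posrE ?subr_gt0 //.
    by rewrite lerB.
  exact: le_lt_trans lt_u1.
have -> : @omega0 R = b \o (fun x => x ^+ 2).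
  by apply: funext => x; rewrite /omega0 /b /= -real_normK ?num_real // expr_lt1.
apply: measurableT_comp; last exact: measurable_realfun.exprn_measurable.
by apply: measurable_realfun.nonincreasing_measurable => // x y; apply: b_noninc.
Qed.

Lemma Rintegral_omega0_le2 (D : set R) : measurable D ->
  \int[lebesgue_measure]_(x in D) omega0 x <= 2.
Proof.
move=> mD; set I11 := `[(-1 : R), 1].
have int_le : (\int[lebesgue_measure]_(x in D) (omega0 x)%:E <= 2%:E)%E.
  apply: le_trans (_ : \int[lebesgue_measure]_(x in D) (\1_I11 x)%:E <= _)%E.
    apply: ge0_le_integral => //.
    - by move=> x _; rewrite lee_fin omega0_ge0.
    - apply/measurable_realfun.measurable_EFinP.
      by apply: measurable_funTS; apply: measurable_omega0.
    - apply/measurable_realfun.measurable_EFinP.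
      by apply: measurable_realfun.measurable_indic; apply: measurable_itv.
    move=> x _; rewrite lee_fin indicE; have [lt_x1|] := boolP (`|x| < 1); last first.
      by rewrite /omega0 => /negbTE ->; case: (_ \in _).
    rewrite mem_set ?omega0_le1 // /I11 /= in_itv /=.
    by move: lt_x1; rewrite ltr_norml => /andP[/ltW -> /ltW ->].
  have mI11 : measurable I11 by apply: measurable_itv.
  rewrite integral_indic //; apply: (@le_trans _ _ (lebesgue_measure I11)).
    by apply: le_measure; rewrite ?inE //; apply: measurableI.
  by rewrite lebesgue_measure_itv /= lte_fin ifT ?opprK -?EFinD ?lee_fin; lra.
have : (0 <= \int[lebesgue_measure]_(x in D) (omega0 x)%:E)%E.
  by apply: integral_ge0 => x _; rewrite lee_fin omega0_ge0.
by rewrite /Rintegral; move: int_le; case: (\int[_]_(_ in _) _)%E.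
Qed.

Lemma c0_ge0 : 0 <= c0 R.
Proof. by apply: Rintegral_ge0 => x _; apply: omega0_ge0. Qed.

Lemma omega_low_ge0 (eps t : R) : 0 <= omega_low eps t.
Proof.
rewrite /omega_low mulr_ge0 ?invr_ge0 ?c0_ge0 //.
by apply: Rintegral_ge0 => x _; apply: omega0_ge0.
Qed.

Lemma omega_low_le (eps t : R) : omega_low eps t <= (c0 R)^-1 * 2.
Proof.
rewrite /omega_low ler_wpM2l ?invr_ge0 ?c0_ge0 //.
by apply: Rintegral_omega0_le2; apply: measurable_itv.
Qed.

Lemma omega_low_eq0 (eps t : R) : 0 < eps -> t <= 0 -> omega_low eps t = 0.
Proof.
move=> eps_gt0 t_le0; rewrite /omega_low /Rintegral integral0_eq ?mulr0 // => x.
rewrite /= in_itv /= /omega0 ltr_norml => le_x; case: ifP => // /andP[lt_m1x _].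
exfalso; have : t / eps <= 0 by rewrite pmulr_lle0 ?invr_gt0.
by move: (lt_le_trans lt_m1x le_x); lra.
Qed.

Lemma w_low_ge0 n (eps : R) (i0 : 'I_n.+1) x : 0 <= w_low eps i0 x.
Proof. by apply: prodr_ge0 => i _; rewrite mulr_ge0 ?omega_low_ge0. Qed.

Lemma w_low_le n (eps : R) (i0 : 'I_n.+1) x :
  w_low eps i0 x <= ((c0 R)^-1 * 2) ^+ (2 * n).
Proof.
apply: le_trans (_ : \prod_(i < n.+1 | i != i0) ((c0 R)^-1 * 2) ^+ 2 <= _).
  apply: ler_prod => i _; rewrite mulr_ge0 ?omega_low_ge0 //=.
  by rewrite expr2 ler_pM ?omega_low_ge0 ?omega_low_le.
by rewrite prodr_const cardC1 card_ord exprM.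
Qed.

Lemma w_low_xvec_eq0 n (eps : R) (i0 : 'I_n.+1) (N : nat) (g : 'I_n -> int) k :
  0 < eps -> (0 < N)%N -> (`|g k| <= 1)%N || (N <= `|g k|)%N ->
  w_low eps i0 (xvec i0 N%:Z g) = 0.
Proof.
move=> eps_gt0 N_gt0 gk_out.
rewrite /w_low (bigD1 (lift i0 k)) /=; last by rewrite eq_sym neq_lift.
rewrite /xvec liftK unlift_none -intr_norm -abszE -[(N%:Z)%:~R]/(N%:R : R).
have NR_gt0 : (0 : R) < N%:R by rewrite ltr0n.
case/orP: gk_out => [le_gk1|le_Ngk].
  rewrite [omega_low eps (_ - 1 / _)]omega_low_eq0 ?mulr0 ?mul0r //.
  by rewrite -mulrBl pmulr_lle0 ?invr_gt0 // subr_le0 lern1.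
rewrite [omega_low eps (1 - _)]omega_low_eq0 ?mul0r //.
by rewrite subr_le0 ler_pdivlMr // mul1r ler_nat.
Qed.
End Weights.

Lemma sum_avec_weighted_S_q_le (R : realType) n (eps : R) (i0 j0 : 'I_n.+1)
    (X y : int) (c : 'I_n.+1 -> int) q (g : 'I_n -> int) : (0 < q)%N ->
  \sum_(a : {ffun 'I_n -> 'I_q})
     w_low eps i0 (xvec i0 X g) * Normc.normc (S_q R q (xvec i0 X g) (avec j0 y a) c)
  <= ((c0 R)^-1 * 2) ^+ (2 * n) * q%:R ^+ (n + 3) *
     \prod_(k < n) (gcdn `|g k| q)%:R.
Proof.
move=> q_gt0; rewrite -mulr_sumr -mulrA.
apply: ler_pM; rewrite ?w_low_ge0 ?w_low_le ?sumr_ge0 //; first by move=> a _; apply: normc_ge0.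
apply: le_trans (sum_avec_normc_S_q_le R j0 (xvec i0 X g) c y q_gt0) _.
have -> : (n + 3 = (2 + n).+1)%N by rewrite addnC.
rewrite big_split prodr_const /= card_ord mulrA -exprD exprSr -mulrA.
rewrite ler_pM2l ?exprn_gt0 ?ltr0n //.
pose gq (i : 'I_n.+1) : R := (gcdn `|xvec i0 X g i| q)%:R.
have -> : \prod_(k < n) (gcdn `|g k| q)%:R = \prod_(k < n) gq (lift i0 k).
  by apply: eq_bigr => k _; rewrite /gq /xvec liftK.
apply: (prod_lift_le (f := gq)) => i.
by rewrite ler1n ler_nat gcdn_gt0 q_gt0 orbT dvdn_leq ?dvdn_gcdr.
Qed.

Lemma esum_finite_support (R : realType) (T : choiceType) (U : finType)
    (F : T -> R) (phi : U -> T) :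
  injective phi -> (forall t, 0 <= F t) -> (forall t, (forall u, phi u != t) -> F t = 0) ->
  (\esum_(t in [set: T]) (F t)%:E = (\sum_(u : U) F (phi u))%:E)%E.
Proof.
move=> phi_inj F_ge0 F_out.
rewrite (@eq_esum _ _ _ _ (fun t => if t \in range phi then (F t)%:E else 0%E)); last first.
  move=> t _; case: ifPn => // t_out; rewrite F_out // => u; apply/eqP => phi_u.
  by move/negP: t_out; apply; rewrite inE; exists u.
rewrite -esum_mkcond esum_image; last by move=> u v _ _; apply: phi_inj.
rewrite esum_fset; [|exact: finite_finset|by move=> u _; rewrite lee_fin].
rewrite (fsbigE (index_enum U)) ?index_enum_uniq //; last by move=> u _; rewrite mem_index_enum.
by rewrite sumEFin; congr (_%:E); apply: eq_bigl => u; rewrite in_setT.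
Qed.

Definition box_point n N (h : {ffun 'I_n -> bool * 'I_N}) : {ffun 'I_n -> int} :=
  [ffun k => if (h k).1 then Negz (h k).2 else Posz (h k).2.+1].

Lemma box_point_inj n N : injective (@box_point n N).
Proof.
move=> h1 h2 /ffunP eq_h; apply/ffunP => k; move: (eq_h k); rewrite !ffunE.
by case: (h1 k) (h2 k) => [[] v1] [[] v2] //= [/val_inj ->].
Qed.

Lemma abs_box_point n N h k : `|@box_point n N h k|%N = (h k).2.+1.
Proof. by rewrite ffunE; case: (h k) => [[]]. Qed.

Lemma box_point_onto n N (g : {ffun 'I_n -> int}) :
  (forall k, 0 < `|g k| <= N)%N -> exists h, @box_point n N h = g.
Proof.
move=> g_in; have lt_gN k : (`|g k|.-1 < N)%N by case/andP: (g_in k) => /prednK ->.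
exists [ffun k => (g k < 0, Ordinal (lt_gN k))]; apply/ffunP => k; rewrite !ffunE /=.
by case/andP: (g_in k); case: (g k) => [[|m]|m].
Qed.

Lemma sum_box_prod_gcdn_le n N q : (0 < q)%N ->
  (\sum_(h : {ffun 'I_n -> bool * 'I_N}) \prod_(k < n) gcdn `|box_point h k| q
   <= (2 * N * ndivisors q) ^ n)%N.
Proof.
move=> q_gt0; under eq_bigr do under eq_bigr do rewrite abs_box_point.
rewrite -(bigA_distr_bigA (fun _ (p : bool * 'I_N) => gcdn p.2.+1 q)) /=.
rewrite prod_nat_const card_ord leq_expn2r // -mulnA.
rewrite -(pair_bigA _ (fun (_ : bool) (v : 'I_N) => gcdn v.+1 q)) /= big_bool /=.
by rewrite addnn -mul2n leq_mul2l sum_gcdn_le.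
Qed.

Lemma w_low_xvec_off_box (R : realType) n (eps : R) (i0 : 'I_n.+1) N
    (g : {ffun 'I_n -> int}) :
  0 < eps -> (forall h : {ffun 'I_n -> bool * 'I_N.+1}, box_point h != g) ->
  w_low eps i0 (xvec i0 N.+1%:Z g) = 0.
Proof.
move=> eps_gt0 g_off; apply/eqP/negPn/negP => w_neq0.
have [|h box_h] := @box_point_onto n N.+1 g; last by move/eqP: (g_off h).
move=> k; apply/negPn/negP => g_out; move/eqP: w_neq0; apply.
apply: (@w_low_xvec_eq0 R n eps i0 N.+1 g k) => //; move: g_out; rewrite negb_and -!ltnNge.
by case/orP => /ltnW ->; rewrite ?orbT.
Qed.

Theorem mainTheorem5 (R : realType) (n : nat) (eps eta : R) :
  (2 <= n)%N -> 0 < eps < 1 -> 0 < eta ->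
  exists C : R,
    forall (i0 j0 : 'I_n.+1) (X y : int) (c : 'I_n.+1 -> int) (q : nat),
      1 <= X -> (1 <= q)%N ->
      (\esum_(g in [set: {ffun 'I_n -> int}])
         (\sum_(a : {ffun 'I_n -> 'I_q})
            w_low eps i0 (xvec i0 X g) *
            Normc.normc (@S_q R n q (xvec i0 X g) (@avec n j0 y q a) c))%:E
       <= (C * (q%:R `^ (n%:R + 3 + eta)) * X%:~R ^+ n)%:E)%E.
Proof.
move=> n_ge2 /andP[eps_gt0 _] eta_gt0.
have [D le_D] := ndivisors_exp_le_powR (ltnW n_ge2) eta_gt0.
pose W := ((c0 R)^-1 * 2) ^+ (2 * n).
have W_ge0 : 0 <= W by rewrite exprn_ge0 ?mulr_ge0 ?invr_ge0 ?c0_ge0.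
exists (W * 2 ^+ n * D) => i0 j0 [[|N]|//] y c q // _ q_gt0.
rewrite (esum_finite_support (phi := @box_point n N.+1)); first last.
- by move=> g g_off; rewrite (w_low_xvec_off_box _ _ g_off) // big1 // => a _; rewrite mul0r.
- by move=> g; rewrite sumr_ge0 // => a _; rewrite mulr_ge0 ?w_low_ge0 ?normc_ge0.
- exact: box_point_inj.
rewrite lee_fin; apply: le_trans (ler_sum _ (fun h _ =>
  sum_avec_weighted_S_q_le eps i0 j0 N.+1 y c (box_point h) q_gt0)) _.
rewrite -mulr_sumr; under eq_bigr do rewrite -natr_prod; rewrite -natr_sum.
apply: le_trans (_ : W * q%:R ^+ (n + 3) * (2 * N.+1 * ndivisors q)%:R ^+ n <= _).
  by rewrite ler_wpM2l ?(mulr_ge0 W_ge0) ?exprn_ge0 // -natrX ler_nat sum_box_prod_gcdn_le.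
have -> : q%:R `^ (n%:R + 3 + eta) = q%:R ^+ (n + 3) * q%:R `^ eta :> R.
  rewrite powRD ?pnatr_eq0 -?lt0n ?q_gt0 ?implybT //.
  by rewrite -powR_mulrn ?ler0n // natrD.
set Q := q%:R ^+ (n + 3); set M := (N.+1%:Z)%:~R ^+ n.
have -> : W * 2 ^+ n * D * (Q * q%:R `^ eta) * M = W * Q * (2 ^+ n * M * (D * q%:R `^ eta)).
  by ring.
rewrite ler_wpM2l ?(mulr_ge0 W_ge0) ?exprn_ge0 // !natrM !exprMn ler_wpM2l ?exprn_ge0 //.
exact: le_D.
Qed.
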